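(* Let $\alpha=(\alpha_n)_{n\in\mathbb{Z}}\in(k^\times)^{\mathbb{Z}}$, $\beta=(\beta_n)_{n\in\mathbb{Z}}\in k^{\mathbb{Z}}$ and $r\in\mathbb{Z}$. Then $(\phi_\alpha\theta_r)\,\phi^{(1)}_\beta\,(\phi_\alpha\theta_r)^{-1}=\phi^{(1)}_{\alpha^{-1}\beta[-r]}$. In particular, $\phi_\alpha\phi^{(1)}_\beta\phi_\alpha^{-1}=\phi^{(1)}_{\alpha^{-1}\beta}$.
   Context: Let $k$ be a field and $0\neq q\in k$ not a root of unity. $H=k_q[x,x^{-1},y]$ is the $k$-algebra generated by $x,x^{-1},y$ with $xx^{-1}=x^{-1}x=1$, $yx=qxy$; $\{x^ny^m:n\in\mathbb{Z},m\in\mathbb{N}\}$ is a $k$-basis. For sequences in $k^{\mathbb{Z}}$ operations are componentwise; $\alpha^{-1}=(\alpha_n^{-1})_n$ and $\beta[r]$ denotes the sequence with $\beta[r]_n=\beta_{n+r}$. $\theta_r$ is the linear map $x^ny^m\mapsto x^{n+r}y^m$; $\phi_\alpha$ is the linear map with $\phi_\alpha(x^n)=x^n$, $\phi_\alpha(x^ny^m)=(\prod_{i=0}^{m-1}\alpha_{n+i})x^ny^m$ for $m\ge1$. With $(j)_q=1+q+\dots+q^{j-1}$, $(m,0)_q=1$, $(m,j)_q=\prod_{i=0}^{j-1}(m-i)_q$, $\beta_{n,0}=1$, $\beta_{n,j}=\prod_{i=0}^{j-1}\beta_{n+i}$, let $\phi^{(1)}_\beta$ be the linear map $H\to H$ with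 $\phi^{(1)}_\beta(x^ny^m)=x^ny^m+\sum_{l=0}^{m-1}(m,m-l)_q\big(\beta_{n,m-l}x^{n+m-l}-\beta_{n,m-l-1}\beta_{n+m-1}x^{n+m-l-1}\big)y^l$. *)

From HB Require Import structures.
From mathcomp Require Import all_boot all_order all_algebra.
From mathcomp Require Import finmap.
From mathcomp Require Import monalg.
Set Implicit Arguments. Unset Strict Implicit. Unset Printing Implicit Defensive.
Import Order.TTheory GRing.Theory Num.Theory.
Local Open Scope ring_scope.

(* Underlying k-vector space of H = k_q[x,x^{-1},y]; the basis element
   x^n y^m is the monomial indexed by (n, m). (Only the linear structure of H
   is used by the statement; all maps involved are merely k-linear.) *)
Definition Hq (k : fieldType) := {malg k[(int * nat)%type]}.

Definition xy (k : fieldType) (n : int) (m : nat) : Hq k := << (n, m) >>.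

Definition linext (k : fieldType) (f : int -> nat -> Hq k) (h : Hq k) : Hq k :=
  \sum_(p <- msupp h) h@_p *: f p.1 p.2.

Definition theta (k : fieldType) (r : int) : Hq k -> Hq k :=
  linext (fun n m => xy k (n + r) m).

Definition bprod (k : fieldType) (b : int -> k) (n : int) (j : nat) : k :=
  \prod_(i < j) b (n + (i : nat)%:Z).

Definition phi (k : fieldType) (a : int -> k) : Hq k -> Hq k :=
  linext (fun n m => bprod a n m *: xy k n m).

Definition qint (k : fieldType) (q : k) (j : nat) : k := \sum_(i < j) q ^+ i.

Definition qfall (k : fieldType) (q : k) (m j : nat) : k :=
  \prod_(i < j) qint q (m - i).

Definition phi1 (k : fieldType) (q : k) (b : int -> k) : Hq k -> Hq k :=
  linext (fun n m =>
    xy k n m +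
    \sum_(l < m)
      qfall q m (m - l) *:
        (bprod b n (m - l) *: xy k (n + (m - l)%:Z) l
         - (bprod b n (m - l - 1) * b (n + m%:Z - 1)) *: xy k (n + (m - l)%:Z - 1) l)).

Definition seqinv (k : fieldType) (a : int -> k) : int -> k := fun n => (a n)^-1.
Definition seqmul (k : fieldType) (a b : int -> k) : int -> k := fun n => a n * b n.
Definition seqshift (k : fieldType) (b : int -> k) (r : int) : int -> k :=
  fun n => b (n + r).

(* phi_alpha theta_r sends each basis vector x^n y^m to the multiple
   alpha_{n+r,m} x^{n+r} y^m of another basis vector.  Conjugating phi^(1)_beta
   by such a weighted shift only shifts and rescales the coefficients of
   phi^(1)_beta(x^n y^m): since alpha_{n,j+l} = alpha_{n,j} alpha_{n+j,l}, the
   term x^{n+j} y^l acquires the weight alpha_{n,m} alpha_{n,j}^{-1} relative to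
   x^n y^m, and alpha_{n,j}^{-1} beta_{n,j} is (alpha^{-1} beta)_{n,j}. *)

From mathcomp Require Import all_boot all_algebra.
From mathcomp Require Import finmap monalg zify.
Import GRing.Theory.
Local Open Scope ring_scope.
Set Implicit Arguments. Unset Strict Implicit.

Section Linearity.
Variable R : pzRingType.

Section LinearMap.
Variables (U V : lmodType R) (F : U -> V).
Hypothesis F_lin : linear F.

Lemma lin0 : F 0 = 0.
Proof.
have := F_lin 1 0 0; rewrite !scale1r addr0 => F00.
by apply: (@addrI _ (F 0)); rewrite addr0 -F00.
Qed.

Lemma linD u v : F (u + v) = F u + F v.
Proof. by rewrite -[u]scale1r F_lin !scale1r. Qed.

Lemma linZ c u : F (c *: u) = c *: F u.
Proof. by rewrite -[c *: u]addr0 F_lin lin0 addr0. Qed.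

Lemma linN u : F (- u) = - F u.
Proof. by apply/eqP; rewrite -subr_eq0 opprK -linD addNr lin0. Qed.

Lemma linZB c1 c2 u1 u2 : F (c1 *: u1 - c2 *: u2) = c1 *: F u1 - c2 *: F u2.
Proof. by rewrite F_lin linN linZ. Qed.

Lemma lin_sum (I : Type) (s : seq I) (G : I -> U) :
  F (\sum_(i <- s) G i) = \sum_(i <- s) F (G i).
Proof.
elim: s => [|i s IHs]; first by rewrite !big_nil lin0.
by rewrite !big_cons linD IHs.
Qed.

End LinearMap.

Lemma lin_comp (U V W : lmodType R) (F : V -> W) (G : U -> V) :
  linear F -> linear G -> linear (F \o G).
Proof. by move=> F_lin G_lin c u v /=; rewrite G_lin F_lin. Qed.

Lemma scalerA_eq (V : lmodType R) (c d c' d' : R) (u : V) :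
  c * d = c' * d' -> c *: (d *: u) = c' *: (d' *: u).
Proof. by move=> E; rewrite !scalerA E. Qed.

Lemma scalerBA_eq (V : lmodType R) (c1 c2 d1 d2 e1 e2 a : R) (u v : V) :
  c1 * d1 = a * e1 -> c2 * d2 = a * e2 ->
  c1 *: (d1 *: u) - c2 *: (d2 *: v) = a *: (e1 *: u - e2 *: v).
Proof. by move=> E1 E2; rewrite scalerBr !scalerA E1 E2. Qed.

End Linearity.

(* Closing a goal in H by [//], or rewriting with a rule that has several
   distinct instances in the goal, makes unification unfold phi, theta and the
   scaling of H into sums over supports, which is very slow: hence the explicit
   side conditions and [LHS] selectors below. *)
Section Basis.
Variable k : fieldType.
Local Notation H := (Hq k).

Lemma linext_fsubset (f : int -> nat -> H) (h : H) (D : {fset int * nat}) :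
  (msupp h `<=` D)%fset -> linext f h = \sum_(p <- D) h@_p *: f p.1 p.2.
Proof.
move=> sub; apply: big_fset_incl => // p _ /mcoeff_outdom->.
by rewrite scale0r.
Qed.

Lemma linext_is_linear (f : int -> nat -> H) : linear (linext f).
Proof.
move=> c h1 h2; set D := (msupp h1 `|` msupp h2)%fset.
rewrite (@linext_fsubset _ h1 D) ?fsubsetUl // (@linext_fsubset _ h2 D) ?fsubsetUr //.
rewrite (@linext_fsubset _ _ D); last first.
  by apply: fsubset_trans (msuppD_le _ _) _; apply: fsetSU; exact: msuppZ_le.
rewrite scaler_sumr -big_split; apply: eq_bigr => p _ /=.
by rewrite mcoeffD mcoeffZ scalerDl scalerA.
Qed.

Lemma linext_xy (f : int -> nat -> H) n m : linext f (xy k n m) = f n m.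
Proof.
rewrite (@linext_fsubset f _ _ (@msuppU_le _ _ (n, m) 1)).
by rewrite big_seq_fset1 mcoeffUU scale1r.
Qed.

Lemma malg_xyE (h : H) : h = \sum_(p <- msupp h) h@_p *: xy k p.1 p.2.
Proof.
rewrite {1}(monalgE h); apply: eq_bigr => -[n m] _ /=.
by apply/malgP => p; rewrite mcoeffZ [LHS]mcoeffU mcoeffU mulr_natr.
Qed.

Lemma eq_linear_xy (F G : H -> H) : linear F -> linear G ->
  (forall n m, F (xy k n m) = G (xy k n m)) -> F =1 G.
Proof.
move=> F_lin G_lin FG h; rewrite (malg_xyE h) (lin_sum F_lin) (lin_sum G_lin).
by apply: eq_bigr => p _; rewrite (linZ F_lin) (linZ G_lin) FG.
Qed.

Lemma theta_linear r : linear (@theta k r).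
Proof. exact: linext_is_linear. Qed.

Lemma phi_linear a : linear (@phi k a).
Proof. exact: linext_is_linear. Qed.

Lemma phi1_linear q b : linear (@phi1 k q b).
Proof. exact: linext_is_linear. Qed.

Lemma theta_xy r n m : theta r (xy k n m) = xy k (n + r) m.
Proof. exact: linext_xy. Qed.

Lemma phi_xy a n m : phi a (xy k n m) = bprod a n m *: xy k n m.
Proof. exact: linext_xy. Qed.

Lemma thetaK r : cancel (@theta k r) (theta (- r)).
Proof.
apply: (@eq_linear_xy (theta (- r) \o theta r) id) => //.
  exact: lin_comp (theta_linear _) (theta_linear _).
by move=> n m /=; rewrite !theta_xy addrK.
Qed.

Lemma thetaNK r : cancel (@theta k (- r)) (theta r).
Proof.
apply: (@eq_linear_xy (theta r \o theta (- r)) id) => //.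
  exact: lin_comp (theta_linear _) (theta_linear _).
by move=> n m /=; rewrite !theta_xy subrK.
Qed.

(* The summand of phi1_beta(x^n y^m) indexed by l, written in terms of
   i = m - l - 1, which avoids truncated subtraction. *)
Definition phi1_term (b : int -> k) (n : int) (i l : nat) : H :=
  bprod b n i.+1 *: xy k (n + i.+1%:Z) l
  - (bprod b n i * b (n + (i + l)%:Z)) *: xy k (n + i%:Z) l.

Lemma phi1_xy q b n m : phi1 q b (xy k n m) =
  xy k n m + \sum_(l < m) qfall q m (m - l) *: phi1_term b n (m - l).-1 l.
Proof.
rewrite /phi1 linext_xy; apply: congr1; apply: eq_bigr => l _; apply: congr1.
have [j Ej] : exists j, (m - l = j.+1)%N.
  by exists (m - l).-1; rewrite prednK // subn_gt0.
have Em : m = (j.+1 + l)%N by rewrite -Ej subnK // ltnW.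
have Eb : n + m%:Z - 1 = n + (j + l)%:Z by lia.
have Ex : n + j.+1%:Z - 1 = n + j%:Z by lia.
by rewrite Ej subn1 /= Eb Ex.
Qed.

End Basis.

Section ShiftedProducts.
Variable k : fieldType.
Implicit Types (f g : int -> k) (n : int).

Lemma bprodD f n i j : bprod f n (i + j) = bprod f n i * bprod f (n + i%:Z) j.
Proof.
rewrite /bprod big_split_ord /=; congr (_ * _); apply: eq_bigr => x _.
by rewrite PoszD addrA.
Qed.

Lemma bprodS f n i : bprod f n i.+1 = bprod f n i * f (n + i%:Z).
Proof. by rewrite -addn1 bprodD /bprod big_ord1 addr0. Qed.

Lemma bprodM f g n j : bprod (seqmul f g) n j = bprod f n j * bprod g n j.
Proof. exact: big_split. Qed.

Lemma bprodV f n j : bprod (seqinv f) n j = (bprod f n j)^-1.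
Proof. exact: prodfV. Qed.

Lemma bprod_shiftN f s n j : bprod (seqshift f (- s)) (n + s) j = bprod f n j.
Proof. by apply: eq_bigr => i _; rewrite /seqshift addrAC addrK. Qed.

Lemma bprod_neq0 f n j : (forall t, f t != 0) -> bprod f n j != 0.
Proof. by move=> f_neq0; apply/prodf_neq0 => i _. Qed.

Lemma bprod_rescale f g n i l : (forall t, f t != 0) ->
  bprod g n i * bprod f (n + i%:Z) l
  = bprod f n (i + l) * bprod (seqmul (seqinv f) g) n i.
Proof.
move=> f_neq0; rewrite bprodD bprodM bprodV.
have := bprod_neq0 n i f_neq0; move: (bprod f n i) => c c_neq0.
by rewrite [c * _]mulrC -mulrA mulVKf // mulrC.
Qed.

End ShiftedProducts.

Section Conjugation.
Variables (k : fieldType) (q : k).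
Implicit Types (a b : int -> k) (n r : int).

Lemma phi_mulK a a' : (forall n, a n * a' n = 1) -> cancel (phi a) (phi a').
Proof.
move=> aa'; apply: (@eq_linear_xy k (phi a' \o phi a) id) => //.
  exact: lin_comp (phi_linear _) (phi_linear _).
move=> n m /=; rewrite phi_xy (linZ (phi_linear a')) phi_xy scalerA -bprodM.
by rewrite [bprod _ _ _]big1 ?scale1r // => i _; apply: aa'.
Qed.

Lemma phi_phi1_term a b n i l : (forall t, a t != 0) ->
  phi a (phi1_term b n i l) =
  bprod a n (i.+1 + l) *: phi1_term (seqmul (seqinv a) b) n i l.
Proof.
move=> a_neq0; set b' := seqmul (seqinv a) b; set t := n + (i + l)%:Z.
have Eb : bprod b n i * b t * bprod a (n + i%:Z) l
          = bprod a n (i.+1 + l) * (bprod b' n i * b' t).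
  rewrite mulrAC bprod_rescale // addSn bprodS /b' /seqmul /seqinv.
  by rewrite -!mulrA [a t * _]mulrCA mulVKf.
rewrite /phi1_term -/t (linZB (phi_linear a)) !phi_xy.
by apply: scalerBA_eq; [exact: bprod_rescale | exact: Eb].
Qed.

Lemma theta_phi1_term r b n i l :
  theta r (phi1_term b n i l) = phi1_term (seqshift b (- r)) (n + r) i l.
Proof.
have Eb : n + r + (i + l)%:Z - r = n + (i + l)%:Z by rewrite addrAC addrK.
rewrite /phi1_term (linZB (theta_linear r)) !theta_xy !bprod_shiftN /seqshift Eb.
by rewrite -!(addrAC n r).
Qed.

Lemma phi_phi1 a b h : (forall t, a t != 0) ->
  phi a (phi1 q b h) = phi1 q (seqmul (seqinv a) b) (phi a h).
Proof.
move=> a_neq0; move: h.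
apply: (@eq_linear_xy k (phi a \o phi1 q b) (phi1 q _ \o phi a)).
- exact: lin_comp (phi_linear a) (phi1_linear q b).
- exact: lin_comp (phi1_linear q _) (phi_linear a).
move=> n m /=; rewrite phi1_xy phi_xy (linZ (phi1_linear q _)) phi1_xy.
rewrite (linD (phi_linear a)) (lin_sum (phi_linear a)) phi_xy scalerDr scaler_sumr.
apply: congr1; apply: eq_bigr => l _.
rewrite (linZ (phi_linear a)) phi_phi1_term; last exact: a_neq0.
apply: scalerA_eq.
by rewrite [LHS]mulrC prednK ?subn_gt0 // subnK // ltnW.
Qed.

Lemma theta_phi1 r b h :
  theta r (phi1 q b h) = phi1 q (seqshift b (- r)) (theta r h).
Proof.
move: h; apply: (@eq_linear_xy k (theta r \o phi1 q b) (phi1 q _ \o theta r)).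
- exact: lin_comp (theta_linear r) (phi1_linear q b).
- exact: lin_comp (phi1_linear q _) (theta_linear r).
move=> n m /=; rewrite phi1_xy theta_xy phi1_xy.
rewrite (linD (theta_linear r)) (lin_sum (theta_linear r)) theta_xy.
apply: congr1; apply: eq_bigr => l _.
by rewrite (linZ (theta_linear r)) theta_phi1_term.
Qed.

End Conjugation.

Theorem lemma3p15 (k : fieldType) (q : k)
    (hq0 : q != 0) (hq : forall n : nat, (0 < n)%N -> q ^+ n != 1)
    (a b : int -> k) (ha : forall n, a n != 0) (r : int) :
  (exists psi : Hq k -> Hq k,
      cancel psi (phi a \o theta r) /\ cancel (phi a \o theta r) psi) /\
  (forall psi : Hq k -> Hq k,
      cancel psi (phi a \o theta r) -> cancel (phi a \o theta r) psi ->
      (phi a \o theta r) \o phi1 q b \o psi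
        =1 phi1 q (seqmul (seqinv a) (seqshift b (- r)))) /\
  (exists psi : Hq k -> Hq k, cancel psi (phi a) /\ cancel (phi a) psi) /\
  (forall psi : Hq k -> Hq k,
      cancel psi (phi a) -> cancel (phi a) psi ->
      phi a \o phi1 q b \o psi =1 phi1 q (seqmul (seqinv a) b)).
Proof.
have phiK : cancel (phi a) (phi (seqinv a)) := phi_mulK (fun n => mulfV (ha n)).
have phiVK : cancel (phi (seqinv a)) (phi a) := phi_mulK (fun n => mulVf (ha n)).
split.
  exists (theta (- r) \o phi (seqinv a)).
  by split; [exact: can_comp (thetaNK r) phiVK | exact: can_comp phiK (thetaK r)].
split.
  move=> psi psiK _ h /=; rewrite theta_phi1 (phi_phi1 q _ _ ha).
  by move: (psiK h) => /= ->.
split; first by exists (phi (seqinv a)).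
by move=> psi psiK _ h /=; rewrite (phi_phi1 q _ _ ha) psiK.
Qed.
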